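(* Let $X$ be a strongly $0$-dimensional, $\sigma$-compact, locally compact Hausdorff space. Then there exists $d\in\mathrm{Met}(X)$ such that for every $\xi\in X$ the map $F_\xi\colon X\to[0,\infty)$, $F_\xi(x)=d(x,\xi)$, is a topological embedding.
   Context: $\mathrm{Met}(X)$ denotes the set of all metrics on $X$ generating the topology of $X$. A topological space is strongly $0$-dimensional if for every pair $A,B$ of disjoint closed subsets there is a clopen set $V$ with $A\subseteq V$, $V\cap B=\emptyset$. *)

From HB Require Import structures.
From mathcomp Require Import all_boot all_order all_algebra.
From mathcomp Require Import all_classical all_reals all_analysis.
Set Implicit Arguments. Unset Strict Implicit. Unset Printing Implicit Defensive.
Import Order.TTheory GRing.Theory Num.Theory.
Local Open Scope classical_set_scope.
Local Open Scope ring_scope.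

Definition is_metric (R : realType) (T : Type) (d : T -> T -> R) : Prop :=
  (forall x y, 0 <= d x y) /\
  (forall x y, d x y = 0 <-> x = y) /\
  (forall x y, d x y = d y x) /\
  (forall x y z, d x z <= d x y + d y z).

Definition generates_topology (R : realType) (X : topologicalType)
  (d : X -> X -> R) : Prop :=
  forall A : set X,
    open A <-> (forall x, A x -> exists2 e : R, 0 < e & [set y | d x y < e] `<=` A).

Definition in_Met (R : realType) (X : topologicalType) (d : X -> X -> R) : Prop :=
  is_metric d /\ generates_topology d.

Definition metrizable (R : realType) (X : topologicalType) : Prop :=
  exists d : X -> X -> R, in_Met d.

Definition strongly_zero_dimensional (X : topologicalType) : Prop :=
  forall A B : set X, closed A -> closed B -> A `&` B = set0 ->
    exists V : set X, [/\ open V, closed V, A `<=` V & V `&` B = set0].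

Definition sigma_compact_space (X : topologicalType) : Prop :=
  exists K : nat -> set X, (forall n, compact (K n)) /\ \bigcup_n K n = setT.

Definition locally_compact_space (X : topologicalType) : Prop :=
  forall x : X, exists K : set X, compact K /\ nbhs x K.

Definition embedding (X Y : topologicalType) (f : X -> Y) : Prop :=
  [/\ injective f, continuous f &
      forall U : set X, open U ->
        exists2 V : set Y, open V & f @` U = f @` setT `&` V].

From HB Require Import structures.
From mathcomp Require Import all_boot all_order all_algebra.
From mathcomp Require Import all_classical all_reals all_analysis.
From mathcomp Require Import lra.
Import Order.TTheory GRing.Theory Num.Theory.
Local Open Scope classical_set_scope.
Local Open Scope ring_scope.

(* Take a countable base (C_k) of clopen sets and let d(x,y) be the sum of 3^-k
   over the k for which C_k separates x and y.  Since 3^-k is at least twice the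
   total weight of all later digits, d(x, xi) determines every digit
   [x \in C_k] != [xi \in C_k], hence x; and if d(y, xi) is within 3^-k / 2 of
   d(x, xi), then y lies in C_k exactly when x does.  The base exists because a
   sigma-compact metric space has finite 3^-m-nets on each compact piece, and
   strong zero-dimensionality puts a clopen set between each closed ball and the
   open ball of twice its radius. *)

Section TernaryExpansion.
Context {R : realType}.

Definition third_pow (n : nat) : R := 3^-1 ^+ n.

Definition ternary_partial (a : nat -> bool) (n : nat) : R :=
  \sum_(j < n) (a j)%:R * third_pow j.

Definition ternary (a : nat -> bool) : R := sup (range (ternary_partial a)).

Lemma third_pow_gt0 n : 0 < third_pow n.
Proof. by rewrite exprn_gt0 // invr_gt0. Qed.

Lemma third_powS n : third_pow n.+1 = third_pow n / 3.
Proof. by rewrite /third_pow exprS mulrC. Qed.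

Lemma third_pow_le {m n : nat} : (m <= n)%N -> third_pow n <= third_pow m.
Proof. by move=> mn; apply: ler_wiXn2l; rewrite ?invr_ge0 ?invf_le1 ?ler1n. Qed.

Lemma third_pow_small {e : R} : 0 < e -> exists n, third_pow n < e.
Proof.
move=> e0; set n := Num.Def.archi_bound e^-1; exists n.
have /archi_boundP : 0 <= e^-1 by rewrite invr_ge0 ltW.
rewrite -/n => en.
have n_lt : (n%:R : R) < (3 ^ n)%:R by rewrite ltr_nat ltn_expl.
rewrite /third_pow exprVn -natrX invf_plt ?posrE ?ltr0n ?expn_gt0 //.
exact: lt_trans en n_lt.
Qed.

Lemma ternary_partialS a n :
  ternary_partial a n.+1 = ternary_partial a n + (a n)%:R * third_pow n.
Proof. by rewrite /ternary_partial big_ord_recr. Qed.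

Lemma digit_term_ge0 (a : nat -> bool) n : 0 <= (a n)%:R * third_pow n.
Proof. by rewrite mulr_ge0 // ltW // third_pow_gt0. Qed.

Lemma digit_term_le (a : nat -> bool) n : (a n)%:R * third_pow n <= third_pow n.
Proof. by case: (a n); rewrite ?mul1r ?mul0r // ltW // third_pow_gt0. Qed.

Lemma ternary_partial_mono a {m n : nat} :
  (m <= n)%N -> ternary_partial a m <= ternary_partial a n.
Proof.
move=> /subnK <-; elim: (n - m)%N => [|k IH] //.
by rewrite addSn ternary_partialS (le_trans IH) // lerDl digit_term_ge0.
Qed.

Lemma ternary_partial_ge0 a n : 0 <= ternary_partial a n.
Proof.
by have := ternary_partial_mono a (leq0n n); rewrite /ternary_partial big_ord0.
Qed.

(* The tail beyond N is dominated by the geometric series [\sum_(j >= N) 3^-j = 3/2 * 3^-N]. *)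
Lemma ternary_partial_tail a N k :
  ternary_partial a (N + k) <=
  ternary_partial a N + 3/2 * (third_pow N - third_pow (N + k)).
Proof.
elim: k => [|k IH]; first by rewrite addn0 subrr mulr0 addr0.
rewrite addnS ternary_partialS third_powS.
have := digit_term_le a (N + k); have := third_pow_gt0 (N + k); lra.
Qed.

Lemma ternary_partial_ub a N n :
  ternary_partial a n <= ternary_partial a N + 3/2 * third_pow N.
Proof.
have w_ge0 := ltW (third_pow_gt0 _).
have [nN|Nn] := leqP n N.
  by rewrite (le_trans (ternary_partial_mono a nN)) // lerDl mulr_ge0.
rewrite -(subnK (ltnW Nn)) addnC (le_trans (ternary_partial_tail _ _ _)) //.
by rewrite lerD2l ler_wpM2l // lerBlDr lerDl.
Qed.

Lemma has_sup_ternary_partial a : has_sup (range (ternary_partial a)).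
Proof.
split; first by exists (ternary_partial a 0), 0%N.
by exists (ternary_partial a 0 + 3/2 * third_pow 0) => _ [n _ <-]; apply: ternary_partial_ub.
Qed.

Lemma ternary_partial_le a n : ternary_partial a n <= ternary a.
Proof. by apply: (sup_upper_bound (has_sup_ternary_partial a)); exists n. Qed.

Lemma ternary_le_ub a (M : R) : (forall n, ternary_partial a n <= M) -> ternary a <= M.
Proof.
by move=> ub; apply: ge_sup; [exists (ternary_partial a 0), 0%N | move=> _ [n _ <-]].
Qed.

Lemma ternary_ge0 a : 0 <= ternary a.
Proof. exact: le_trans (ternary_partial_ge0 a 0) (ternary_partial_le a 0). Qed.

Lemma ternary_le_partial a N :
  ternary a <= ternary_partial a N + 3/2 * third_pow N.
Proof. by apply: ternary_le_ub => n; apply: ternary_partial_ub. Qed.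

Lemma ternary_digit_lb a N :
  ternary_partial a N + (a N)%:R * third_pow N <= ternary a.
Proof. by rewrite -ternary_partialS ternary_partial_le. Qed.

Lemma ternary_digit_ub a N :
  ternary a <= ternary_partial a N + (a N)%:R * third_pow N + third_pow N / 2.
Proof.
apply: le_trans (ternary_le_partial a N.+1) _.
rewrite ternary_partialS third_powS; have := third_pow_gt0 N; lra.
Qed.

Lemma third_pow_le_ternary {a : nat -> bool} {k : nat} : a k -> third_pow k <= ternary a.
Proof.
move=> ak; apply: le_trans (ternary_digit_lb a k).
by rewrite ak mul1r lerDr ternary_partial_ge0.
Qed.

Lemma ternary_le_prefix0 {a : nat -> bool} {N : nat} :
  (forall i, (i < N)%N -> ~~ a i) -> ternary a <= 3/2 * third_pow N.
Proof.
move=> a0; suff P0 : ternary_partial a N = 0.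
  by have := ternary_le_partial a N; rewrite P0 add0r.
by rewrite /ternary_partial big1 // => i _; rewrite (negbTE (a0 i (ltn_ord i))) mul0r.
Qed.

Lemma ternary_eq0 (a : nat -> bool) : (forall n, ~~ a n) -> ternary a = 0.
Proof.
move=> a0; apply/eqP; rewrite eq_le ternary_ge0 andbT; apply: ternary_le_ub => n.
by rewrite /ternary_partial big1 // => i _; rewrite (negbTE (a0 i)) mul0r.
Qed.

Lemma ternary_le_add (a b c : nat -> bool) :
  (forall n, (a n <= b n + c n)%N) -> ternary a <= ternary b + ternary c.
Proof.
move=> abc; apply: ternary_le_ub => n.
apply: le_trans (lerD (ternary_partial_le b n) (ternary_partial_le c n)).
rewrite /ternary_partial -big_split /=; apply: ler_sum => i _.
by rewrite -mulrDl ler_wpM2r ?(ltW (third_pow_gt0 _)) // -natrD ler_nat.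
Qed.

Lemma ternary_partial_eq (a b : nat -> bool) j :
  (forall i, (i < j)%N -> a i = b i) -> ternary_partial a j = ternary_partial b j.
Proof. by move=> ab; apply: eq_bigr => i _; rewrite ab. Qed.

(* All digits after [j] together weigh at most [3^-j / 2]. *)
Lemma ternary_gap (a b : nat -> bool) j :
  (forall i, (i < j)%N -> a i = b i) -> a j -> ~~ b j ->
  third_pow j / 2 <= ternary a - ternary b.
Proof.
move=> ab aj /negbTE bj.
have := ternary_digit_lb a j; have := ternary_digit_ub b j.
by rewrite aj bj (@ternary_partial_eq a b j ab) mul1r mul0r addr0; lra.
Qed.

Lemma ternary_agree (a b : nat -> bool) k :
  `|ternary a - ternary b| < third_pow k / 2 -> forall i, (i <= k)%N -> a i = b i.
Proof.
move=> close i ik; apply/eqP/negPn/negP => abi.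
have ex_diff : exists n, (n <= k)%N && (a n != b n) by exists i; rewrite ik.
case: (ex_minnP ex_diff) => j /andP[jk abj] jmin.
have agree l : (l < j)%N -> a l = b l.
  move=> lj; apply/eqP/negPn/negP => abl.
  by have := jmin l; rewrite (leq_trans (ltnW lj) jk) abl => /(_ isT); rewrite leqNgt lj.
suff gap : third_pow j / 2 <= `|ternary a - ternary b|.
  have := third_pow_le jk; lra.
move: abj; case aj: (a j); case bj: (b j) => // _.
  by rewrite (le_trans _ (ler_norm _)) // ternary_gap ?bj.
rewrite distrC (le_trans _ (ler_norm _)) // ternary_gap ?aj // => l /agree.
by move=> ->.
Qed.

End TernaryExpansion.

Lemma metric_dist_sub {R : realType} {T : Type} {d : T -> T -> R} :
  is_metric d -> forall x y z, `|d x z - d y z| <= d x y.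
Proof.
move=> [_ [_ [dC dtri]]] x y z; have := dtri x y z; have := dtri y x z.
by rewrite (dC y x) ler_norml; lra.
Qed.

Section ClopenBaseMetric.
Context {R : realType} {X : topologicalType} (C : nat -> set X).
Hypothesis C_clopen : forall k, clopen (C k).
Hypothesis C_base : forall x U, open U -> U x -> exists k, C k x /\ C k `<=` U.

Definition separating_digits (x y : X) (k : nat) : bool :=
  `[< C k x >] != `[< C k y >].

Definition clopen_dist (x y : X) : R := ternary (separating_digits x y).

Lemma separating_digitsP x y k :
  reflect (~ (C k x <-> C k y)) (separating_digits x y k).
Proof.
rewrite /separating_digits.
by case: asboolP => Cx; case: asboolP => Cy /=; constructor; tauto.
Qed.

Lemma separating_digits_eq x y z k :
  separating_digits x z k = separating_digits y z k -> (C k x <-> C k y).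
Proof.
rewrite /separating_digits.
by case: asboolP => Cx; case: asboolP => Cy; case: asboolP => Cz //= _; tauto.
Qed.

Lemma base_separates : accessible_space X ->
  forall x y, x != y -> exists k, C k x /\ ~ C k y.
Proof.
move=> X_T1 x y /X_T1 [A [oA xA yA]]; rewrite !inE in xA yA.
by have [k [Ckx CkA]] := C_base _ _ oA xA; exists k; split => // /CkA.
Qed.

Lemma clopen_dist_metric : accessible_space X -> is_metric clopen_dist.
Proof.
move=> X_T1; split; first by move=> x y; apply: ternary_ge0.
split.
  move=> x y; split => [dxy0|->]; last by apply: ternary_eq0 => k; rewrite negbK.
  apply/eqP/negPn/negP => /(base_separates X_T1) [k [Ckx Cky]].
  have sep_k : separating_digits x y k by apply/separating_digitsP; tauto.
  have := third_pow_le_ternary (R := R) sep_k.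
  by rewrite -/(clopen_dist x y) dxy0 leNgt third_pow_gt0.
split.
  by move=> x y; congr ternary; apply: funext => k; rewrite /separating_digits eq_sym.
move=> x y z; apply: ternary_le_add => k; rewrite /separating_digits.
by case: `[< C k x >]; case: `[< C k y >]; case: `[< C k z >].
Qed.

Lemma agree_prefix_open x N : open [set y | forall k, (k < N)%N -> (C k y <-> C k x)].
Proof.
elim: N => [|N IH].
  have -> : [set y | forall k, (k < 0)%N -> (C k y <-> C k x)] = setT.
    by rewrite predeqE => y; split => // _ k.
  exact: openT.
have -> : [set y | forall k, (k < N.+1)%N -> (C k y <-> C k x)] =
    [set y | forall k, (k < N)%N -> (C k y <-> C k x)] `&` [set y | C N y <-> C N x].
  rewrite predeqE => y; split => [agree|[agree agreeN] k].
    by split => [k kN|]; apply: agree => //; apply: ltnW.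
  by rewrite ltnS leq_eqVlt => /orP[/eqP ->|/agree].
apply: openI => //; have [oCN cCN] := C_clopen N.
have [CNx|CNx] := pselect (C N x).
  have -> : [set y | C N y <-> C N x] = C N by rewrite predeqE => y /=; tauto.
  exact: oCN.
have -> : [set y | C N y <-> C N x] = ~` C N by rewrite predeqE => y /=; tauto.
exact: closed_openC.
Qed.

Lemma clopen_dist_small x {e : R} : 0 < e ->
  exists2 U, open U /\ U x & forall y, U y -> clopen_dist x y < e.
Proof.
move=> e0; have [N wN] := third_pow_small e0.
exists [set y | forall k, (k < N.+1)%N -> (C k y <-> C k x)].
  by split; [apply: agree_prefix_open | move=> k].
move=> y agree; have digits0 k : (k < N.+1)%N -> ~~ separating_digits x y k.
  by move/agree => kyx; apply/separating_digitsP; tauto.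
by apply: le_lt_trans (ternary_le_prefix0 digits0) _; rewrite third_powS; lra.
Qed.

Lemma clopen_dist_generates : generates_topology clopen_dist.
Proof.
move=> A; split => [oA x Ax|ballA].
  have [k [Ckx CkA]] := C_base _ _ oA Ax.
  exists (third_pow k); first exact: third_pow_gt0.
  move=> y /= dxy; apply: CkA.
  have [/(third_pow_le_ternary (R := R)) k_le|/separating_digitsP /contrapT [xy _]] :=
    boolP (separating_digits x y k); last exact: xy.
  by have := lt_le_trans dxy k_le; rewrite ltxx.
rewrite openE => x /ballA [e e0 ballA_sub].
have [U [oU Ux] Ue] := clopen_dist_small x e0.
by rewrite /interior nbhsE; exists U => // y /Ue /ballA_sub.
Qed.

Lemma clopen_dist_close_mem {x y z : X} {k : nat} :
  `|clopen_dist x z - clopen_dist y z| < third_pow k / 2 -> C k x -> C k y.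
Proof. by move/ternary_agree => /(_ k (leqnn k)) /separating_digits_eq []. Qed.

Section Embedding.
Import numFieldNormedType.Exports.
Hypothesis X_T1 : accessible_space X.
Variable xi : X.

Lemma clopen_dist_inj : injective (clopen_dist ^~ xi).
Proof.
move=> x y dxy; apply/eqP/negPn/negP => /(base_separates X_T1) [k [Ckx]]; apply.
apply: (@clopen_dist_close_mem _ _ xi _ _ Ckx).
by rewrite dxy subrr normr0 divr_gt0 ?third_pow_gt0.
Qed.

Lemma clopen_dist_ge0 x : `[0, +oo[%classic (clopen_dist x xi).
Proof. by rewrite /= in_itv /= andbT; apply: ternary_ge0. Qed.

Lemma clopen_dist_continuous :
  continuous (fun x : X => clopen_dist x xi : subspace `[0, +oo[%classic).
Proof.
move=> x W /(nbhs_subspace_ex _ (clopen_dist_ge0 x)) [V /nbhs_ballP [e e0 ballV] WV].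
have [U [oU Ux] Ue] := clopen_dist_small x e0.
rewrite nbhsE; exists U => // y Uy /=.
suff : (V `&` `[0, +oo[%classic) (clopen_dist y xi) by rewrite -WV => -[].
split; last exact: clopen_dist_ge0.
apply: ballV; rewrite -ball_normE /ball_ /=.
exact: le_lt_trans (metric_dist_sub (clopen_dist_metric X_T1) x y xi) (Ue y Uy).
Qed.

Lemma clopen_dist_embedding :
  embedding (fun x : X => clopen_dist x xi : subspace `[0, +oo[%classic).
Proof.
split; [exact: clopen_dist_inj | exact: clopen_dist_continuous | move=> U oU].
pose V := \bigcup_(p in [set p : X * nat | C p.2 p.1 /\ C p.2 `<=` U])
  ball (clopen_dist p.1 xi) (third_pow p.2 / 2).
exists (V : set (subspace `[0, +oo[%classic)).
  by apply: open_subspaceW; apply: bigcup_open => p _; apply: ball_open.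
rewrite predeqE => r; split.
  case=> y Uy <-; split; first by exists y.
  have [k [Cky CkU]] := C_base _ _ oU Uy.
  by exists (y, k) => //=; apply: ballxx; rewrite divr_gt0 ?third_pow_gt0.
case=> -[y _ <-] [[x k] /= [Ckx CkU]]; rewrite -ball_normE /ball_ /= => close.
by exists y => //; apply/CkU/(clopen_dist_close_mem close).
Qed.

End Embedding.
End ClopenBaseMetric.

Lemma clopen_between (X : topologicalType) (A B : set X) :
  strongly_zero_dimensional X -> closed A -> open B -> A `<=` B ->
  exists V, [/\ clopen V, A `<=` V & V `<=` B].
Proof.
move=> szdX cA oB AB.
have [|V [oV cV AV VB]] := szdX A (~` B) cA (open_closedC oB).
  by rewrite -subset0 => x [/AB].
exists V; split => // x Vx; apply: contrapT => nBx.
by have : (V `&` ~` B) x by []; rewrite VB.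
Qed.

Lemma compact_nbhs_finite_cover (X : topologicalType) (K : set X) (Q : X -> set X) :
  compact K -> (forall x, K x -> nbhs x (Q x)) ->
  exists s : seq X, K `<=` [set y | exists2 q, q \in s & Q q y].
Proof.
move=> /compact_near_coveringP cK KQ.
pose F := filter_from [set: seq X] (fun s0 => [set s : seq X | {subset s0 <= s}]).
have F_filter : Filter F.
  apply: filter_from_filter; first by exists [::].
  move=> s1 s2 _ _; exists (s1 ++ s2) => // s /= sub.
  by split=> z zs; apply: sub; rewrite mem_cat zs ?orbT.
have [x Kx|s0 _ cover] := cK (seq X) F (fun s y => exists2 q, q \in s & Q q y) F_filter.
  exists (Q x, [set s | {subset [:: x] <= s}]); first by split; [apply: KQ | exists [:: x]].
  by case=> y s /= [Qy sub]; exists x => //; apply: sub; rewrite mem_head.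
by exists s0; apply: cover.
Qed.

Section MetricClopenBase.
Context {R : realType} {X : topologicalType} {d : X -> X -> R}.
Hypothesis d_met : in_Met d.

Lemma metric_ball_open q (r : R) : open [set y | d q y < r].
Proof.
have [[_ [_ [_ dtri]]] dgen] := d_met.
apply/dgen => y /= qy; exists (r - d q y); first by rewrite subr_gt0.
by move=> z /= yz; have := dtri q y z; lra.
Qed.

Lemma metric_cball_closed q (r : R) : closed [set y | d q y <= r].
Proof.
have [[_ [_ [dC dtri]]] dgen] := d_met.
rewrite -openC; apply/dgen => y /= /negP; rewrite -ltNge => qy.
exists (d q y - r); first by rewrite subr_gt0.
move=> z /= yz; apply/negP; rewrite -ltNge; have := dtri q z y.
by rewrite (dC z y); lra.
Qed.

Lemma metric_dist_self x : d x x = 0.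
Proof. by have [[_ [dE _]] _] := d_met; apply/dE. Qed.

Lemma compact_metric_net (K : set X) (r : R) : compact K -> 0 < r ->
  exists s : seq X, K `<=` [set y | exists2 q, q \in s & d q y < r].
Proof.
move=> cK r0; apply: compact_nbhs_finite_cover cK _ => x _.
by apply: open_nbhs_nbhs; split; [apply: metric_ball_open | rewrite /= metric_dist_self].
Qed.

Lemma metric_clopen_balls : strongly_zero_dimensional X ->
  exists V : X -> nat -> set X, forall q m,
    [/\ clopen (V q m), [set y | d q y <= third_pow m] `<=` V q m
      & V q m `<=` [set y | d q y < 2 * third_pow m]].
Proof.
move=> szdX; suff /choice [V HV] : forall qm : X * nat, exists V : set X,
    [/\ clopen V, [set y | d qm.1 y <= third_pow qm.2] `<=` V
      & V `<=` [set y | d qm.1 y < 2 * third_pow qm.2]].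
  by exists (fun q m => V (q, m)) => q m; apply: HV.
case=> q m; apply: clopen_between => //.
- exact: metric_cball_closed.
- exact: metric_ball_open.
- by move=> y /=; have := third_pow_gt0 (R := R) m; lra.
Qed.

Lemma sigma_compact_metric_nets : sigma_compact_space X ->
  exists net : nat -> nat -> seq X, forall m x,
    exists n, exists2 q, q \in net n m & d q x < third_pow m.
Proof.
move=> [K [cK KT]].
suff /choice [net Hnet] : forall nm : nat * nat, exists s : seq X,
    K nm.1 `<=` [set y | exists2 q, q \in s & d q y < third_pow nm.2].
  exists (fun n m => net (n, m)) => m x.
  have : [set: X] x by [].
  by rewrite -KT => -[n _ /(Hnet (n, m))]; exists n.
by case=> n m; apply: compact_metric_net; rewrite ?third_pow_gt0.
Qed.

Lemma countable_clopen_base :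
  strongly_zero_dimensional X -> sigma_compact_space X ->
  exists C : nat -> set X, (forall k, clopen (C k)) /\
    (forall x U, open U -> U x -> exists k, C k x /\ C k `<=` U).
Proof.
move=> /metric_clopen_balls [V HV] /sigma_compact_metric_nets [net Hnet].
have [[_ [_ [dC dtri]]] dgen] := d_met.
pose C k := if unpickle k is Some (n, m, i)
  then nth set0 [seq V q m | q <- net n m] i else set0.
exists C; split.
  move=> k; rewrite /C; case: (unpickle k) => [[[n m] i]|]; last exact: clopen0.
  elim: (net n m) i => [|q s IH] [|i] //=; try exact: clopen0.
  by have [] := HV q m.
move=> x U oU Ux; have [e e0 ballU] := (dgen U).1 oU x Ux.
have [N wN] := third_pow_small e0.
have [n [q qnet qx]] := Hnet N.+1 x.
exists (pickle (n, N.+1, index q (net n N.+1))).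
rewrite /C pickleK (nth_map q) ?index_mem // nth_index //.
have [_ ballV Vball] := HV q N.+1; split; first by apply: ballV; rewrite /= ltW.
move=> y /Vball /= qy; apply: ballU => /=.
by have := dtri x q y; rewrite (dC x q) third_powS in qx qy *; lra.
Qed.

End MetricClopenBase.

Theorem theorem1p4 (R : realType) (X : topologicalType) :
  metrizable R X ->
  strongly_zero_dimensional X ->
  sigma_compact_space X ->
  locally_compact_space X ->
  hausdorff_space X ->
  exists d : X -> X -> R, in_Met d /\
    (forall xi : X,
       embedding (fun x : X => d x xi : subspace `[0, +oo[%classic)).
Proof.
move=> [d0 d0_met] szdX scX _ /hausdorff_accessible X_T1.
have [C [C_clopen C_base]] := countable_clopen_base d0_met szdX scX.
exists (clopen_dist C); split.
  by split; [apply: clopen_dist_metric | apply: clopen_dist_generates].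
by move=> xi; apply: clopen_dist_embedding.
Qed.
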